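(* Let $A=(a_{ij})_{i,j\in\{1,\dots,\theta\}}$ be an indecomposable generalized Cartan matrix of indefinite type, $Q=\bigoplus_i\mathbb Z\alpha_i$ its root lattice, $Q_+=\sum_i\mathbb N_0\alpha_i$, and $W$ its Weyl group. Then for every $\gamma\in Q_+\setminus\{0\}$ the set $W\gamma\cap Q_+$ is infinite.
   Context: $W$ is the subgroup of $\mathrm{GL}(Q)$ generated by the simple reflections $s_i(\alpha_j)=\alpha_j-a_{ij}\alpha_i$. Types (finite, affine, indefinite) of indecomposable generalized Cartan matrices are in the sense of Kac. *)

From HB Require Import structures.
From mathcomp Require Import all_boot all_order all_algebra.
Set Implicit Arguments. Unset Strict Implicit. Unset Printing Implicit Defensive.
Import Order.TTheory GRing.Theory Num.Theory.
Local Open Scope ring_scope.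

(* A theta x theta integer matrix A; elements of the root lattice
   Q = (+)_i Z alpha_i are integer column vectors (coordinates in the
   basis alpha_1..alpha_theta). *)

Definition is_GCM (n : nat) (A : 'M[int]_n) : Prop :=
  (forall i, A i i = 2) /\
  (forall i j, i != j -> A i j <= 0) /\
  (forall i j, A i j = 0 <-> A j i = 0).

Definition indecomposable (n : nat) (A : 'M[int]_n) : Prop :=
  forall I : {set 'I_n},
    (forall i j, i \in I -> j \notin I -> A i j = 0) ->
    I = set0 \/ I = setT.

(* Kac, Thm 4.3 (Ind): there is u > 0 with Au < 0, and
   Av >= 0, v >= 0 imply v = 0.  Vectors taken rational. *)
Definition indefinite_type (n : nat) (A : 'M[int]_n) : Prop :=
  let Aq := map_mx (fun z : int => z%:~R : rat) A in
  (exists u : 'cV[rat]_n,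
      (forall i, 0 < u i 0) /\ (forall i, (Aq *m u) i 0 < 0)) /\
  (forall v : 'cV[rat]_n,
      (forall i, 0 <= v i 0) -> (forall i, 0 <= (Aq *m v) i 0) -> v = 0).

(* simple reflection s_i(beta) = beta - (sum_j a_ij beta_j) alpha_i,
   so that s_i(alpha_j) = alpha_j - a_ij alpha_i *)
Definition sref (n : nat) (A : 'M[int]_n) (i : 'I_n) (b : 'cV[int]_n)
  : 'cV[int]_n :=
  \col_k (b k 0 - (k == i)%:R * (A *m b) i 0).

Definition word_act (n : nat) (A : 'M[int]_n) (w : seq 'I_n) (b : 'cV[int]_n)
  : 'cV[int]_n :=
  foldr (sref A) b w.

(* beta in W gamma; W is generated by the involutions s_i, so its
   elements are exactly the finite products of simple reflections *)
Definition in_W_orbit (n : nat) (A : 'M[int]_n) (gamma beta : 'cV[int]_n)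
  : Prop :=
  exists w : seq 'I_n, beta = word_act A w gamma.

Definition in_Qplus (n : nat) (b : 'cV[int]_n) : Prop :=
  forall i, 0 <= b i 0.

From HB Require Import structures.
From mathcomp Require Import all_boot all_order all_algebra.
Import Order.TTheory GRing.Theory Num.Theory.
Set Implicit Arguments.
Unset Strict Implicit.
Unset Printing Implicit Defensive.
Local Open Scope ring_scope.

(* Let ht be the height (sum of coordinates).  If beta is a nonzero element
   of Q_+, indefinite type forbids A beta >= 0, so (A beta)_i < 0 for some i;
   then s_i beta = beta - (A beta)_i alpha_i is again in Q_+ and has larger
   height.  Iterating from gamma gives elements of W gamma ∩ Q_+ of unbounded
   height, which no finite list can contain. *)

Definition ht (n : nat) (b : 'cV[int]_n) : int := \sum_k b k 0.

Lemma ht0 n : ht (0 : 'cV[int]_n) = 0.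
Proof. by rewrite /ht big1 // => k _; rewrite mxE. Qed.

Lemma ht_ge0 n (b : 'cV[int]_n) : in_Qplus b -> 0 <= ht b.
Proof. by move=> b_ge0; apply: sumr_ge0 => k _; apply: b_ge0. Qed.

Lemma ht_sref n (A : 'M[int]_n) i b : ht (sref A i b) = ht b - (A *m b) i 0.
Proof.
rewrite /ht (eq_bigr (fun k => b k 0 - (k == i)%:R * (A *m b) i 0)).
  rewrite sumrB; congr (_ - _).
  by rewrite (bigD1 i) //= eqxx mul1r big1 ?addr0 // => k /negbTE->; rewrite mul0r.
by move=> k _; rewrite mxE.
Qed.

Lemma ht_sref_gt n (A : 'M[int]_n) i b :
  (A *m b) i 0 < 0 -> ht b < ht (sref A i b).
Proof. by rewrite ht_sref ltrDl oppr_gt0. Qed.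

Lemma sref_Qplus n (A : 'M[int]_n) i b :
  in_Qplus b -> (A *m b) i 0 <= 0 -> in_Qplus (sref A i b).
Proof.
move=> b_ge0 Abi_le0 k; rewrite mxE; have := b_ge0 k.
case: (k == i); rewrite ?mul1r ?mul0r ?subr0 // => _.
by rewrite subr_ge0 (le_trans Abi_le0).
Qed.

Lemma indefinite_Qplus_neg_entry n (A : 'M[int]_n) b :
  indefinite_type A -> in_Qplus b -> b != 0 -> exists i, (A *m b) i 0 < 0.
Proof.
move=> [_ nonneg_eq0] b_ge0 b_neq0.
have [/existsP[i Abi_lt0] | /existsPn Ab_ge0] :=
  boolP [exists i, (A *m b) i 0 < 0]; first by exists i.
have bq_eq0 : map_mx intr b = 0 :> 'cV[rat]_n.
  apply: nonneg_eq0 => k; first by rewrite mxE ler0z.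
  by rewrite -map_mxM mxE ler0z leNgt Ab_ge0.
case/eqP: b_neq0; apply/matrixP => i j; rewrite (ord1 j) mxE.
by move/matrixP/(_ i 0)/eqP: bq_eq0; rewrite !mxE intr_eq0 => /eqP.
Qed.

Lemma Qplus_orbit_ht_unbounded n (A : 'M[int]_n) gamma :
    indefinite_type A -> in_Qplus gamma -> gamma != 0 ->
  forall N : nat, exists w : seq 'I_n,
    [/\ in_Qplus (word_act A w gamma), word_act A w gamma != 0
      & N%:Z <= ht (word_act A w gamma)].
Proof.
move=> indefA gamma_ge0 gamma_neq0.
elim=> [|N [w [beta_ge0 beta_neq0 N_le_ht]]].
  by exists [::]; split; rewrite ?ht_ge0.
have [i Abi_lt0] := indefinite_Qplus_neg_entry indefA beta_ge0 beta_neq0.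
have ht_lt := ht_sref_gt Abi_lt0.
exists (i :: w); split=> /=.
- exact: sref_Qplus (ltW Abi_lt0).
- by apply: contraTneq ht_lt => ->; rewrite ht0 -leNgt ht_ge0.
- by rewrite -addn1 PoszD lezD1 (le_lt_trans N_le_ht).
Qed.

Lemma mem_ht_le_sum n (s : seq 'cV[int]_n) x :
  x \in s -> ht x <= (\sum_(y <- s) absz (ht y))%N%:Z.
Proof.
move=> x_in_s; rewrite (le_trans (ler_norm _)) // -abszE lez_nat.
by rewrite (big_rem _ x_in_s) leq_addr.
Qed.

Theorem lemma3p5 (n : nat) (A : 'M[int]_n) :
  is_GCM A -> indecomposable A -> indefinite_type A ->
  forall gamma : 'cV[int]_n, in_Qplus gamma -> gamma != 0 ->
  forall s : seq 'cV[int]_n,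
    exists beta : 'cV[int]_n,
      [/\ in_W_orbit A gamma beta, in_Qplus beta & beta \notin s].
Proof.
move=> _ _ indefA gamma gamma_ge0 gamma_neq0 s.
have [w [beta_ge0 _ ht_large]] := Qplus_orbit_ht_unbounded indefA gamma_ge0
  gamma_neq0 (\sum_(y <- s) absz (ht y)).+1.
exists (word_act A w gamma); split => //; first by exists w.
apply: contraTN ht_large => /mem_ht_le_sum ht_small.
by rewrite -ltNge (le_lt_trans ht_small) // ltz_nat.
Qed.
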